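(* Let the iterates be generated by the Fast PL-ADMM-PS algorithm and set $\hat{\boldsymbol{\lambda}}^{k+1}=\boldsymbol{\lambda}^k+\beta(\mathcal{A}(\mathbf{z}^k)-\mathbf{b})$. Then for every $k\ge0$, every $i\in\{1,\dots,n\}$ and every $\mathbf{x}_i$, $$\frac{1-\theta^{(k+1)}}{(\theta^{(k+1)})^2}\bigl(f_i(\mathbf{x}_i^{k+1})-f_i(\mathbf{x}_i)\bigr)-\frac{1}{\theta^{(k)}}\bigl\langle\mathcal{A}_i^T(\hat{\boldsymbol{\lambda}}^{k+1}),\mathbf{x}_i-\mathbf{z}_i^{k+1}\bigr\rangle$$ $$\le\frac{1-\theta^{(k)}}{(\theta^{(k)})^2}\bigl(f_i(\mathbf{x}_i^k)-f_i(\mathbf{x}_i)\bigr)+\frac{L_i}{2}\bigl(\|\mathbf{z}_i^k-\mathbf{x}_i\|^2-\|\mathbf{z}_i^{k+1}-\mathbf{x}_i\|^2\bigr)+\frac{\beta\eta_i}{2\theta^{(k)}}\bigl(\|\mathbf{z}_i^k-\mathbf{x}_i\|^2-\|\mathbf{z}_i^{k+1}-\mathbf{x}_i\|^2-\|\mathbf{z}_i^{k+1}-\mathbf{z}_i^k\|^2\bigr).$$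
   Context: Setting: finite-dimensional real inner product spaces with induced norms $\|\cdot\|$. Problem: $\min\sum_{i=1}^n f_i(\mathbf{x}_i)$, $f_i=g_i+h_i$, subject to $\mathcal{A}(\mathbf{x}):=\sum_{i=1}^n\mathcal{A}_i(\mathbf{x}_i)=\mathbf{b}$, where $\mathbf{x}=(\mathbf{x}_1,\dots,\mathbf{x}_n)$, each $g_i,h_i$ is proper convex lower semicontinuous, $g_i$ is differentiable with $L_i$-Lipschitz gradient ($L_i>0$), each $\mathcal{A}_i$ is a nonzero linear map (adjoint $\mathcal{A}_i^T$, operator norm $\|\mathcal{A}_i\|$) into a common space. Fast PL-ADMM-PS: fix $\beta>0$ and $\eta_i>n\|\mathcal{A}_i\|^2$; given $\mathbf{x}^0,\mathbf{z}^0,\boldsymbol{\lambda}^0$ and $\theta^{(0)}=1$, for $k=0,1,2,\dots$, for each $i=1,\dots,n$ (in parallel): $\mathbf{y}_i^{k+1}=(1-\theta^{(k)})\mathbf{x}_i^k+\theta^{(k)}\mathbf{z}_i^k$; $\mathbf{z}_i^{k+1}=\arg\min_{\mathbf{x}_i}\ \langle\nabla g_i(\mathbf{y}_i^{k+1}),\mathbf{x}_i\rangle+h_i(\mathbf{x}_i)+\langle\boldsymbol{\lambda}^k,\mathcal{A}_i(\mathbf{x}_i)\rangle+\langle\beta\mathcal{A}_i^T(\mathcal{A}(\mathbf{z}^k)-\mathbf{b}),\mathbf{x}_i\rangle+\frac{L_i\theta^{(k)}+\beta\eta_i}{2}\|\mathbf{x}_i-\mathbf{z}_i^k\|^2$;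 $\mathbf{x}_i^{k+1}=(1-\theta^{(k)})\mathbf{x}_i^k+\theta^{(k)}\mathbf{z}_i^{k+1}$; then $\boldsymbol{\lambda}^{k+1}=\boldsymbol{\lambda}^k+\beta(\mathcal{A}(\mathbf{z}^{k+1})-\mathbf{b})$ and $\theta^{(k+1)}=\frac{-(\theta^{(k)})^2+\sqrt{(\theta^{(k)})^4+4(\theta^{(k)})^2}}{2}$. *)

From mathcomp Require Import ssreflect ssrfun ssrbool eqtype ssrnat seq fintype bigop.
From Stdlib Require Import Reals.
Set Implicit Arguments.
Unset Strict Implicit.
Open Scope R_scope.

(* A finite-dimensional real inner product space is modelled as R^d with the
   standard inner product. *)
Definition vec (d : nat) := 'I_d -> R.
Definition vadd {d} (x y : vec d) : vec d := fun j => x j + y j.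
Definition vsub {d} (x y : vec d) : vec d := fun j => x j - y j.
Definition vscale {d} (c : R) (x : vec d) : vec d := fun j => c * x j.
Definition ip {d} (x y : vec d) : R := \big[Rplus/0]_(j < d) (x j * y j).
Definition norm {d} (x : vec d) : R := sqrt (ip x x).

Definition mat (m d : nat) := 'I_m -> 'I_d -> R.
Definition mapply {m d} (M : mat m d) (x : vec d) : vec m :=
  fun r => \big[Rplus/0]_(j < d) (M r j * x j).
Definition madj {m d} (M : mat m d) (y : vec m) : vec d :=
  fun j => \big[Rplus/0]_(r < m) (M r j * y r).
Definition mat_nonzero {m d} (M : mat m d) : Prop := exists r j, M r j <> 0.
Definition is_opnorm {m d} (M : mat m d) (c : R) : Prop :=
  is_lub (fun t => exists x : vec d, norm x <= 1 /\ t = norm (mapply M x)) c.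

(* Extended reals (-oo,+oo] : None stands for +oo. *)
Definition le_ext (a b : option R) : Prop :=
  match b with
  | None => True
  | Some y => match a with None => False | Some x => x <= y end
  end.
Definition oshift (a : R) (o : option R) : option R := option_map (Rplus a) o.
(* value of a point known to be in the domain (None is mapped to 0; only used
   where the point is in the domain or the coefficient is zero) *)
Definition ev (o : option R) : R := match o with Some v => v | None => 0 end.

Definition proper_fun {d} (f : vec d -> option R) : Prop :=
  exists x v, f x = Some v.
Definition convex_fun {d} (f : vec d -> option R) : Prop :=
  forall (x y : vec d) (a b t : R), f x = Some a -> f y = Some b -> 0 <= t <= 1 ->
    exists c, f (vadd (vscale t x) (vscale (1 - t) y)) = Some c /\
              c <= t * a + (1 - t) * b.
Definition lsc_fun {d} (f : vec d -> option R) : Prop :=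
  forall (x : vec d) (M : R), le_ext (Some M) (f x) -> f x <> Some M ->
    exists delta, 0 < delta /\ forall y, norm (vsub y x) < delta ->
      le_ext (Some M) (f y) /\ f y <> Some M.

Definition is_gradient {d} (f : vec d -> R) (G : vec d -> vec d) : Prop :=
  forall (x : vec d) (eps : R), 0 < eps -> exists delta, 0 < delta /\
    forall hh : vec d, norm hh < delta ->
      Rabs (f (vadd x hh) - f x - ip (G x) hh) <= eps * norm hh.
Definition lipschitz {d} (G : vec d -> vec d) (Lc : R) : Prop :=
  forall x y : vec d, norm (vsub (G x) (G y)) <= Lc * norm (vsub x y).

Definition is_argmin {d} (F : vec d -> option R) (z : vec d) : Prop :=
  exists v, F z = Some v /\ forall u, le_ext (Some v) (F u).

Definition Aall {n m} {d : 'I_n -> nat} (A : forall i, mat m (d i))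
  (x : forall i, vec (d i)) : vec m :=
  fun r => \big[Rplus/0]_(i < n) mapply (A i) (x i) r.

(* Fix k and i and write t = theta^(k), y = y_i^(k+1).  The step for z_i is a
   proximal step on h_i for the linearisation of g_i at y, shifted by the dual
   estimate A_i^T(lamhat^(k+1)).  Three estimates are combined: the descent lemma
   g_i(x^(k+1)) <= g_i(y) + <grad g_i(y), x^(k+1) - y> + L_i/2 |x^(k+1) - y|^2
   (note x^(k+1) - y = t (z^(k+1) - z^k)), the gradient inequality for the convex
   g_i at y tested at x^k and at x, and the three-point property of the proximal
   step, which is strongly convex with modulus L_i t + beta eta_i.  Taking the
   combination with weights 1 - t and t and using convexity of h_i along
   x^(k+1) = (1 - t) x^k + t z^(k+1) gives the estimate multiplied by t^2; the
   momentum recursion makes (1 - theta^(k+1)) / (theta^(k+1))^2 = 1 / t^2.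
   Only this one iteration is involved. *)

From HB Require Import structures.
From mathcomp Require Import ssreflect ssrfun ssrbool eqtype ssrnat seq fintype bigop.
From Stdlib Require Import Reals Lra FunctionalExtensionality.
Open Scope R_scope.

HB.instance Definition _ := Monoid.isComLaw.Build R 0 Rplus
  (fun a b c => esym (Rplus_assoc a b c)) Rplus_comm Rplus_0_l.

Ltac vec_ring :=
  apply: functional_extensionality => ?; rewrite /vadd /vsub /vscale; ring.

Lemma big_Rmult_distrl d (F : 'I_d -> R) a :
  a * (\big[Rplus/0]_(j < d) F j) = \big[Rplus/0]_(j < d) (a * F j).
Proof. by apply: (big_rec2 (fun s1 s2 => a * s1 = s2)) => [|j s1 s2 _ <-]; ring. Qed.

Lemma discriminant_le a b c :
  (forall t, 0 <= a - 2 * t * b + t * t * c) -> 0 <= c -> b * b <= a * c.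
Proof.
move=> Hq Hc; case: (Rle_lt_or_eq_dec 0 c Hc) => [c_gt0|c_eq0]; last subst c.
  have := Hq (b / c).
  have -> : a - 2 * (b / c) * b + b / c * (b / c) * c = (a * c - b * b) / c
    by field; lra.
  move=> H; have : 0 <= (a * c - b * b) / c * c by apply: Rmult_le_pos; lra.
  have -> : (a * c - b * b) / c * c = a * c - b * b by field; lra.
  lra.
case: (Req_dec b 0) => [->|b_neq0]; first lra.
have := Hq ((a + 1) / (2 * b)).
have -> : a - 2 * ((a + 1) / (2 * b)) * b + (a + 1) / (2 * b) * ((a + 1) / (2 * b)) * 0
   = -1 by field.
lra.
Qed.

Section InnerProduct.
Context {d : nat}.
Implicit Types (x y z : vec d) (c : R).

Lemma ip_sym x y : ip x y = ip y x.
Proof. by rewrite /ip; apply: eq_bigr => j _; ring. Qed.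

Lemma ip_addl x y z : ip (vadd x y) z = ip x z + ip y z.
Proof. by rewrite /ip -big_split; apply: eq_bigr => j _ /=; rewrite /vadd; ring. Qed.

Lemma ip_scalel c x z : ip (vscale c x) z = c * ip x z.
Proof. by rewrite /ip big_Rmult_distrl; apply: eq_bigr => j _; rewrite /vscale; ring. Qed.

Lemma ip_subl x y z : ip (vsub x y) z = ip x z - ip y z.
Proof.
have -> : vsub x y = vadd x (vscale (-1) y) by vec_ring.
by rewrite ip_addl ip_scalel; ring.
Qed.

Lemma ip_addr x y z : ip z (vadd x y) = ip z x + ip z y.
Proof. by rewrite ip_sym ip_addl (ip_sym x) (ip_sym y). Qed.

Lemma ip_subr x y z : ip z (vsub x y) = ip z x - ip z y.
Proof. by rewrite ip_sym ip_subl (ip_sym x) (ip_sym y). Qed.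

Lemma ip_scaler c x z : ip z (vscale c x) = c * ip z x.
Proof. by rewrite ip_sym ip_scalel (ip_sym x). Qed.

Lemma ip_ge0 x : 0 <= ip x x.
Proof.
apply: (big_ind (fun s => 0 <= s)) => [||j _]; [lra | move=> ? ?; lra | exact: Rle_0_sqr].
Qed.

Lemma norm_ge0 x : 0 <= norm x.
Proof. exact: sqrt_pos. Qed.

Lemma norm_sq x : norm x ^ 2 = ip x x.
Proof. by rewrite /norm /= Rmult_1_r sqrt_sqrt //; apply: ip_ge0. Qed.

Lemma norm_scale c x : norm (vscale c x) = Rabs c * norm x.
Proof.
rewrite /norm ip_scalel ip_scaler -Rmult_assoc sqrt_mult_alt; last exact: Rle_0_sqr.
by rewrite -sqrt_Rsqr_abs.
Qed.

Lemma cauchy_schwarz x y : ip x y <= norm x * norm y.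
Proof.
have Hsq : ip x y * ip x y <= ip x x * ip y y.
  apply: discriminant_le; last exact: ip_ge0.
  move=> t; have := ip_ge0 (vsub x (vscale t y)).
  rewrite !ip_subl !ip_subr !ip_scalel !ip_scaler (ip_sym y x); lra.
apply: Rle_trans (Rle_abs _) _.
rewrite /norm -sqrt_mult_alt; last exact: ip_ge0.
by rewrite -sqrt_Rsqr_abs; apply: sqrt_le_1_alt; rewrite /Rsqr.
Qed.

Lemma vadd_scale0 y v : vadd y (vscale 0 v) = y.
Proof. vec_ring. Qed.

End InnerProduct.

Lemma ip_madj m d (M : mat m d) (y : vec m) (x : vec d) :
  ip y (mapply M x) = ip (madj M y) x.
Proof.
rewrite /ip /mapply /madj.
transitivity (\big[Rplus/0]_(r < m) \big[Rplus/0]_(j < d) (y r * (M r j * x j))).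
  by apply: eq_bigr => r _; rewrite big_Rmult_distrl.
rewrite exchange_big /=; apply: eq_bigr => j _.
by rewrite Rmult_comm big_Rmult_distrl; apply: eq_bigr => r _; ring.
Qed.

Lemma derivable_pt_lim_line {d} {f : vec d -> R} {G} : is_gradient f G ->
  forall y v t, derivable_pt_lim (fun s => f (vadd y (vscale s v))) t
                                 (ip (G (vadd y (vscale t v))) v).
Proof.
move=> Hg y v t eps eps_gt0.
(* Dividing by norm v + 1 rather than norm v also covers v = 0. *)
have nv_ge0 := norm_ge0 v.
have [delta [delta_gt0 Hdelta]] := Hg (vadd y (vscale t v)) (eps / (norm v + 1))
  ltac:(apply: Rdiv_lt_0_compat; lra).
have step_gt0 : 0 < delta / (norm v + 1) by apply: Rdiv_lt_0_compat; lra.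
exists (mkposreal _ step_gt0) => s s_neq0 /= Hs.
have -> : vadd y (vscale (t + s) v) = vadd (vadd y (vscale t v)) (vscale s v) by vec_ring.
have s_gt0 : 0 < Rabs s by apply: Rabs_pos_lt.
have Hsmall : Rabs s * (norm v + 1) < delta.
  move: Hs; rewrite /Rdiv => /(Rmult_lt_compat_r (norm v + 1)).
  by rewrite Rmult_assoc Rinv_l; lra.
have := Hdelta (vscale s v) ltac:(rewrite norm_scale; nra).
rewrite norm_scale ip_scaler.
set D := f _ - f _ - _ => HD.
have -> : (f (vadd (vadd y (vscale t v)) (vscale s v)) - f (vadd y (vscale t v))) / s
          - ip (G (vadd y (vscale t v))) v = D / s by rewrite /D; field.
rewrite /Rdiv Rabs_mult Rabs_inv.
apply: (Rmult_lt_reg_r (Rabs s)) => //; rewrite Rmult_assoc Rinv_l; last lra.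
rewrite Rmult_1_r; apply: Rle_lt_trans HD _.
have : eps / (norm v + 1) * norm v < eps.
  apply: (Rmult_lt_reg_r (norm v + 1)); first lra.
  have -> : eps / (norm v + 1) * norm v * (norm v + 1) = eps * norm v by field; lra.
  nra.
nra.
Qed.

Lemma derivable_pt_lim_linear C s : derivable_pt_lim (fun t => t * C) s C.
Proof.
have := derivable_pt_lim_mult id (fct_cte C) s 1 0 (derivable_pt_lim_id s)
  (derivable_pt_lim_const C s).
by rewrite /id /fct_cte Rmult_0_r Rmult_1_l Rplus_0_r.
Qed.

Lemma derivable_pt_lim_quadratic C s :
  derivable_pt_lim (fun t => t * (t * C)) s (2 * s * C).
Proof.
have := derivable_pt_lim_mult id (fun t => t * C) s 1 C (derivable_pt_lim_id s)
  (derivable_pt_lim_linear C s).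
by rewrite /id (_ : 1 * (s * C) + s * C = 2 * s * C) //; ring.
Qed.

Lemma derivative_le_chord {phi : R -> R} {l} :
  derivable_pt_lim phi 0 l ->
  (forall t, 0 < t <= 1 -> phi t <= (1 - t) * phi 0 + t * phi 1) ->
  l <= phi 1 - phi 0.
Proof.
move=> Hd Hchord; apply: Rnot_lt_le => Hlt.
have [delta Hdelta] := Hd (l - (phi 1 - phi 0)) ltac:(lra).
have delta_gt0 := cond_pos delta.
set s := Rmin 1 (delta / 2).
have s_gt0 : 0 < s by apply: Rmin_pos; lra.
have s_le1 : s <= 1 by apply: Rmin_l.
have s_small : s <= delta / 2 by apply: Rmin_r.
have Hquot : (phi s - phi 0) / s <= phi 1 - phi 0.
  apply: (Rmult_le_reg_r s) => //; rewrite /Rdiv Rmult_assoc Rinv_l; last lra.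
  have := Hchord s (conj s_gt0 s_le1); lra.
have := Hdelta s (Rgt_not_eq _ _ s_gt0) ltac:(rewrite Rabs_right; lra).
rewrite Rplus_0_l => /Rabs_def2; lra.
Qed.

Lemma descent_lemma {d} {f : vec d -> R} {G Lc} : is_gradient f G -> lipschitz G Lc ->
  forall y v, f (vadd y v) <= f y + ip (G y) v + Lc / 2 * ip v v.
Proof.
move=> Hg HL y v.
pose phi s := f (vadd y (vscale s v)) - s * ip (G y) v - s * (s * (Lc / 2 * ip v v)).
have Hphi s : derivable_pt_lim phi s
    (ip (G (vadd y (vscale s v))) v - ip (G y) v - 2 * s * (Lc / 2 * ip v v)).
  exact (derivable_pt_lim_minus _ _ _ _ _
    (derivable_pt_lim_minus _ _ _ _ _ (derivable_pt_lim_line Hg y v s)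
       (derivable_pt_lim_linear _ s)) (derivable_pt_lim_quadratic _ s)).
have [c [Hmvt [c_gt0 _]]] := MVT_cor1 phi 0 1 (fun s => exist _ _ (Hphi s)) Rlt_0_1.
have Hslope : ip (G (vadd y (vscale c v))) v - ip (G y) v <= Lc * c * ip v v.
  rewrite -ip_subl -norm_sq; apply: Rle_trans (cauchy_schwarz _ _) _.
  have := HL (vadd y (vscale c v)) y.
  have -> : vsub (vadd y (vscale c v)) y = vscale c v by vec_ring.
  rewrite norm_scale Rabs_right; last lra.
  by move/(Rmult_le_compat_r (norm v) _ _ (norm_ge0 v)) => /=; lra.
have : phi 1 <= phi 0 by rewrite /derive_pt /= in Hmvt; nra.
rewrite /phi vadd_scale0 (_ : vadd y (vscale 1 v) = vadd y v); [lra | vec_ring].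
Qed.

Lemma convex_gradient_ineq {d} {f : vec d -> R} {G} : is_gradient f G ->
  convex_fun (fun v => Some (f v)) -> forall y w, f y + ip (G y) (vsub w y) <= f w.
Proof.
move=> Hg Hc y w.
have Hend : vadd y (vscale 1 (vsub w y)) = w by vec_ring.
have Hchord t : 0 < t <= 1 -> f (vadd y (vscale t (vsub w y))) <= (1 - t) * f y + t * f w.
  move=> Ht; have [c [Hc1 Hc2]] := Hc w y (f w) (f y) t erefl erefl ltac:(lra).
  have -> : vadd y (vscale t (vsub w y)) = vadd (vscale t w) (vscale (1 - t) y) by vec_ring.
  by case: Hc1 => ->; lra.
have /= := derivative_le_chord (derivable_pt_lim_line Hg y (vsub w y) 0).
rewrite !vadd_scale0 Hend => /(_ Hchord); lra.
Qed.

Lemma ge0_of_linear_perturbation E M :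
  (forall t, 0 < t <= 1 -> 0 <= E + t * M) -> 0 <= E.
Proof.
move=> H; apply: Rnot_lt_le => E_lt0.
have := H 1 ltac:(lra); rewrite Rmult_1_l => EM_ge0.
have Ht : 0 < - E / (2 * M) <= 1.
  split; first by apply: Rdiv_lt_0_compat; lra.
  apply: (Rmult_le_reg_r (2 * M)); first lra.
  rewrite /Rdiv Rmult_assoc Rinv_l; lra.
have := H _ Ht.
have -> : E + - E / (2 * M) * M = E / 2 by field; lra.
lra.
Qed.

Lemma three_point {d} {hf : vec d -> option R} {Q z u z' : vec d} {K hu : R} :
  convex_fun hf ->
  is_argmin (fun w => oshift (ip Q w + K * norm (vsub w z) ^ 2) (hf w)) z' ->
  hf u = Some hu ->
  exists hz', hf z' = Some hz' /\
   hz' + ip Q z' + K * ip (vsub z' z) (vsub z' z) + K * ip (vsub z' u) (vsub z' u)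
     <= hu + ip Q u + K * ip (vsub u z) (vsub u z).
Proof.
move=> Hc [v [Hv Hmin]] Hu.
rewrite norm_sq in Hv.
case Ez': (hf z') Hv => [hz'|] //= [Hv].
exists hz'; split => //.
set E := hu - hz' + ip Q u - ip Q z' + 2 * K * ip (vsub z' z) (vsub u z').
set M := K * ip (vsub u z') (vsub u z').
suff : 0 <= E.
  by rewrite /E !ip_subl !ip_subr (ip_sym z' u) (ip_sym z u) (ip_sym z z'); lra.
apply: (@ge0_of_linear_perturbation E M) => t Ht.
have [ct [Hct Hle]] := Hc u z' hu hz' t Hu Ez' ltac:(lra).
have := Hmin (vadd (vscale t u) (vscale (1 - t) z')).
rewrite Hct norm_sq /= => Hm.
suff : 0 <= t * (E + t * M) by move=> H; apply: (Rmult_le_reg_l t); lra.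
move: Hm Hle; rewrite -Hv /E /M.
rewrite !ip_subl !ip_subr !ip_addl !ip_addr !ip_scalel !ip_scaler
  (ip_sym z' u) (ip_sym z u) (ip_sym z z').
lra.
Qed.

Lemma linearized_prox_step {d} {g : vec d -> R} {G} {hf : vec d -> option R}
    {Li be t : R} {M x z z' u : vec d} {hx hxp hu : R} :
  is_gradient g G -> lipschitz G Li ->
  convex_fun (fun v => Some (g v)) -> convex_fun hf -> 0 <= t <= 1 ->
  let y := vadd (vscale (1 - t) x) (vscale t z) in
  is_argmin (fun w => oshift (ip (vadd (G y) M) w
                              + (Li * t + be) / 2 * norm (vsub w z) ^ 2) (hf w)) z' ->
  (forall hz', hf z' = Some hz' -> hxp <= (1 - t) * hx + t * hz') ->
  hf u = Some hu ->
  g (vadd (vscale (1 - t) x) (vscale t z')) + hxp - (g u + hu) - t * ip M (vsub u z')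
  <= (1 - t) * (g x + hx - (g u + hu))
     + t ^ 2 / 2 * Li * (norm (vsub z u) ^ 2 - norm (vsub z' u) ^ 2)
     + t / 2 * be * (norm (vsub z u) ^ 2 - norm (vsub z' u) ^ 2
                     - norm (vsub z' z) ^ 2).
Proof.
move=> Hg HL Hgc Hhc Ht y Hopt Hhxp Hu.
have [hz' [Ez' Hprox]] := three_point Hhc Hopt Hu.
have Hh := Hhxp hz' Ez'.
have Hdesc := descent_lemma Hg HL y (vscale t (vsub z' z)).
have -> : vadd (vscale (1 - t) x) (vscale t z') = vadd y (vscale t (vsub z' z))
  by rewrite /y; vec_ring.
have Hgx := Rmult_le_compat_l (1 - t) _ _ ltac:(lra) (convex_gradient_ineq Hg Hgc y x).
have Hgu := Rmult_le_compat_l t _ _ ltac:(lra) (convex_gradient_ineq Hg Hgc y u).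
have Hprox' := Rmult_le_compat_l t _ _ ltac:(lra) Hprox.
rewrite !norm_sq; move: Hdesc Hgx Hgu Hprox' Hh; rewrite /y.
rewrite !ip_subl !ip_subr !ip_addl !ip_addr !ip_scalel !ip_scaler !ip_subl !ip_subr
  ?(ip_sym z z') ?(ip_sym z u) ?(ip_sym z' u).
lra.
Qed.

Lemma momentum_root {a t : R} : 0 < a <= 1 ->
  t = (- a ^ 2 + sqrt (a ^ 4 + 4 * a ^ 2)) / 2 -> 0 < t < 1 /\ t ^ 2 = a ^ 2 * (1 - t).
Proof.
move=> Ha ->.
have disc_ge0 : 0 <= a ^ 4 + 4 * a ^ 2 by nra.
have Hsq := sqrt_sqrt _ disc_ge0.
have s_ge0 := sqrt_pos (a ^ 4 + 4 * a ^ 2).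
set s := sqrt _ in Hsq s_ge0 *.
have s_gt : a ^ 2 < s.
  apply: Rnot_le_lt => Hle.
  have : s * s <= a ^ 2 * a ^ 2 by apply: Rmult_le_compat; lra.
  nra.
have s_lt : s < a ^ 2 + 2.
  apply: Rnot_le_lt => Hle.
  have : (a ^ 2 + 2) * (a ^ 2 + 2) <= s * s by apply: Rmult_le_compat; nra.
  nra.
split; [lra | nra].
Qed.

Section Momentum.
Context {theta : nat -> R}.
Hypothesis theta0 : theta 0%nat = 1.
Hypothesis thetaS : forall k,
  theta (S k) = (- theta k ^ 2 + sqrt (theta k ^ 4 + 4 * theta k ^ 2)) / 2.

Lemma theta_in01 k : 0 < theta k <= 1.
Proof.
elim: k => [|k IHk]; first by rewrite theta0; lra.
by have [] := momentum_root IHk (thetaS k); lra.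
Qed.

Lemma theta_succ k :
  0 < theta (S k) < 1 /\ theta (S k) ^ 2 = theta k ^ 2 * (1 - theta (S k)).
Proof. exact: momentum_root (theta_in01 k) (thetaS k). Qed.

End Momentum.

Lemma scale_step_estimate {t t' P B C Li n1 be n2 : R} : 0 < t -> 0 < t' < 1 ->
  t' ^ 2 = t ^ 2 * (1 - t') ->
  P - t * B <= (1 - t) * C + t ^ 2 / 2 * Li * n1 + t / 2 * be * n2 ->
  (1 - t') / t' ^ 2 * P - 1 / t * B
   <= (1 - t) / t ^ 2 * C + Li / 2 * n1 + be / (2 * t) * n2.
Proof.
move=> t_gt0 t'_01 Hsq H.
have -> : (1 - t') / t' ^ 2 = 1 / t ^ 2 by rewrite Hsq; field; lra.
have -> : 1 / t ^ 2 * P - 1 / t * B = (P - t * B) / t ^ 2 by field; lra.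
have -> : (1 - t) / t ^ 2 * C + Li / 2 * n1 + be / (2 * t) * n2
  = ((1 - t) * C + t ^ 2 / 2 * Li * n1 + t / 2 * be * n2) / t ^ 2 by field; lra.
apply: Rmult_le_compat_r H.
by apply/Rlt_le/Rinv_0_lt_compat/pow_lt.
Qed.

Lemma convex_fun_comb {d} {f : vec d -> option R} {x y a b t} :
  convex_fun f -> f x = Some a -> f y = Some b -> 0 <= t <= 1 ->
  exists c, f (vadd (vscale (1 - t) x) (vscale t y)) = Some c /\
            c <= (1 - t) * a + t * b.
Proof.
move=> Hf Hx Hy Ht.
have [c [Hc Hle]] := Hf x y a b (1 - t) Hx Hy ltac:(lra).
rewrite (_ : 1 - (1 - t) = t) in Hc Hle; last ring.
by exists c.
Qed.

Lemma argmin_dom {d} {F : vec d -> R} {hf : vec d -> option R} {z} :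
  is_argmin (fun w => oshift (F w) (hf w)) z -> exists v, hf z = Some v.
Proof. by move=> [v []]; case: (hf z) => [a|] //= _ _; exists a. Qed.

Section ConvexAlongIterates.
Context {d : nat} {hf : vec d -> option R} {theta : nat -> R} {xs zs : nat -> vec d}.
Hypothesis hf_convex : convex_fun hf.
Hypothesis theta0 : theta 0%nat = 1.
Hypothesis theta_in01 : forall k, 0 < theta k <= 1.
Hypothesis xsS : forall k,
  xs (S k) = vadd (vscale (1 - theta k) (xs k)) (vscale (theta k) (zs (S k))).
Hypothesis zs_dom : forall k, exists v, hf (zs (S k)) = Some v.

Lemma xs1 : xs 1%nat = zs 1%nat.
Proof. by rewrite xsS theta0; vec_ring. Qed.

Lemma xs_dom k : exists v, hf (xs (S k)) = Some v.
Proof.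
elim: k => [|k [a Ha]]; first by rewrite xs1; apply: zs_dom.
have [b Hb] := zs_dom (S k).
have t01 : 0 <= theta (S k) <= 1 by have := theta_in01 (S k); lra.
have [c [Hc _]] := convex_fun_comb hf_convex Ha Hb t01.
by exists c; rewrite xsS.
Qed.

(* For k = 0 the point xs 0 may lie outside dom hf, but its junk value
   ev None = 0 carries the coefficient 1 - theta 0 = 0. *)
Lemma ev_xs_step k hz : hf (zs (S k)) = Some hz ->
  ev (hf (xs (S k))) <= (1 - theta k) * ev (hf (xs k)) + theta k * hz.
Proof.
case: k => [|k] Hz.
  by rewrite xs1 theta0 Hz /=; lra.
have [a Ha] := xs_dom k.
have t01 : 0 <= theta (S k) <= 1 by have := theta_in01 (S k); lra.
have [c [Hc Hle]] := convex_fun_comb hf_convex Ha Hz t01.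
by rewrite xsS Hc Ha /=.
Qed.

End ConvexAlongIterates.
Theorem proposition3 (n m : nat) (d : 'I_n -> nat)
  (g : forall i, vec (d i) -> R) (gradg : forall i, vec (d i) -> vec (d i))
  (h : forall i, vec (d i) -> option R)
  (L : 'I_n -> R) (A : forall i, mat m (d i)) (b : vec m)
  (beta : R) (eta : 'I_n -> R)
  (xs zs : nat -> forall i, vec (d i)) (lam : nat -> vec m) (theta : nat -> R) :
  (forall i, 0 < L i) ->
  (forall i, proper_fun (fun v => Some (g i v)) /\
             convex_fun (fun v => Some (g i v)) /\ lsc_fun (fun v => Some (g i v))) ->
  (forall i, is_gradient (g i) (gradg i)) ->
  (forall i, lipschitz (gradg i) (L i)) ->
  (forall i, proper_fun (h i) /\ convex_fun (h i) /\ lsc_fun (h i)) ->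
  (forall i, mat_nonzero (A i)) ->
  0 < beta ->
  (forall i, exists c, is_opnorm (A i) c /\ INR n * c ^ 2 < eta i) ->
  theta 0%nat = 1 ->
  (forall k, theta (S k) =
     (- theta k ^ 2 + sqrt (theta k ^ 4 + 4 * theta k ^ 2)) / 2) ->
  (forall k i,
     let y := vadd (vscale (1 - theta k) (xs k i)) (vscale (theta k) (zs k i)) in
     is_argmin (fun u : vec (d i) =>
        oshift (ip (gradg i y) u + ip (lam k) (mapply (A i) u)
                + ip (vscale beta (madj (A i) (vsub (Aall A (zs k)) b))) u
                + (L i * theta k + beta * eta i) / 2 * norm (vsub u (zs k i)) ^ 2)
               (h i u))
       (zs (S k) i)) ->
  (forall k i, xs (S k) i =
     vadd (vscale (1 - theta k) (xs k i)) (vscale (theta k) (zs (S k) i))) ->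
  (forall k, lam (S k) = vadd (lam k) (vscale beta (vsub (Aall A (zs (S k))) b))) ->
  forall (k : nat) (i : 'I_n) (u : vec (d i)) (hu : R), h i u = Some hu ->
  let lamhat := vadd (lam k) (vscale beta (vsub (Aall A (zs k)) b)) in
  let fu := g i u + hu in
  (1 - theta (S k)) / theta (S k) ^ 2
      * (g i (xs (S k) i) + ev (h i (xs (S k) i)) - fu)
    - 1 / theta k * ip (madj (A i) lamhat) (vsub u (zs (S k) i))
  <= (1 - theta k) / theta k ^ 2 * (g i (xs k i) + ev (h i (xs k i)) - fu)
     + L i / 2 * (norm (vsub (zs k i) u) ^ 2 - norm (vsub (zs (S k) i) u) ^ 2)
     + beta * eta i / (2 * theta k)
       * (norm (vsub (zs k i) u) ^ 2 - norm (vsub (zs (S k) i) u) ^ 2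
          - norm (vsub (zs (S k) i) (zs k i)) ^ 2).
Proof.
move=> _ Hg Hgrad Hlip Hh _ _ _ theta0 thetaS Hopt Hx _ k i u hu Hu lamhat fu.
have theta_bounds := theta_in01 theta0 thetaS.
have [theta_k1 Hsq] := theta_succ theta0 thetaS k.
have [_ [Hgc _]] := Hg i.
have [_ [Hhc _]] := Hh i.
have zs_dom k' : exists v, h i (zs (S k') i) = Some v := argmin_dom (Hopt k' i).
apply: (scale_step_estimate (proj1 (theta_bounds k)) theta_k1 Hsq).
rewrite {1}Hx.
apply: (linearized_prox_step (M := madj (A i) lamhat) (Hgrad i) (Hlip i) Hgc Hhc
          _ _ _ Hu).
- by have := theta_bounds k; lra.
- apply: (eq_ind _ (fun F => is_argmin F (zs (S k) i)) (Hopt k i)).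
  apply: functional_extensionality => w; congr (oshift _ _).
  by rewrite /lamhat ip_addl -ip_madj ip_addl !ip_scalel -ip_madj; ring.
- exact: (ev_xs_step (xs := fun k => xs k i) (zs := fun k => zs k i)
            Hhc theta0 theta_bounds (fun k => Hx k i) zs_dom).
Qed.
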